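(* Let $\varphi(x)$ be a formula of the correspondence language with only $x$ free that is invariant with respect to $(2,2)$-modal asimulations. Then $\varphi(x)$ is logically equivalent to $ST_{22}(I,x)$ for some modal intuitionistic formula $I$.
   Context: Correspondence language: classical first-order logic without identity over $\Sigma=\{R,R_\Box,R_\Diamond,P_1,P_2,\dots\}$ ($R,R_\Box,R_\Diamond$ binary, $P_n$ unary). $\Theta$ is a subset of $\Sigma$ containing $R,R_\Box,R_\Diamond$; $\Theta$-models $M_k=\langle U_k,\iota_k\rangle$, with $R_k=\iota_k(R)$, $R_{\Box k}=\iota_k(R_\Box)$, $R_{\Diamond k}=\iota_k(R_\Diamond)$. $\Sigma_\varphi=\{R,R_\Box,R_\Diamond\}\cup\{P_n:P_n\text{ occurs in }\varphi\}$. $a\models_k\varphi(x)$ means $\varphi$ holds in $M_k$ under assignments sending $x$ to $a$. $s\overset{\leftrightarrow}{A}t$ means $sAt$ and $tAs$. Modal intuitionistic formulas: built from $p_n,\bot$ with $\wedge,\vee,\to,\Box,\Diamond$. $ST_{22}(p_n,x)=P_n(x)$, $ST_{22}(\bot,x)=\bot$, commutes with $\wedge,\vee$; $ST_{22}(I\to J,x)=\forall y(R(x,y)\to(ST_{22}(I,y)\to ST_{22}(J,y)))$; $ST_{22}(\Box I,x)=\forall y(R(x,y)\to\forall z(R_\Box(y,z)\to ST_{22}(I,z)))$; $ST_{22}(\Diamond I,x)=\forall y(R(x,y)\to\exists z(R_\Diamond(y,z)\wedge ST_{22}(I,z)))$. A $(2,2)$-modal $\langle(M_1,t),(M_2,u)\rangle$-asimulation,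 for pointed $\Theta$-models, is a pair $(A,B)$ with $A,B\subseteq(U_1\times U_2)\cup(U_2\times U_1)$ such that $tAu$ and, for all $i,j\in\{1,2\}$, $a,c,e\in U_i$, $b,d,f\in U_j$, unary $P\in\Theta$: if $aAb$ and $a\models_iP(x)$ then $b\models_jP(x)$; if $aAb$, $bR_jd$ then some $c\in U_i$ has $aR_ic$ and $c\overset{\leftrightarrow}{A}d$; if $aAb$, $bR_jd$, $dR_{\Box j}f$ then some $c,e\in U_i$ have $aR_ic$, $cR_{\Box i}e$, $eAf$; if $aAb$, $bR_jd$ then some $c\in U_i$ has $aR_ic$ and $cBd$; if $aBb$, $aR_{\Diamond i}c$ then some $d\in U_j$ has $bR_{\Diamond j}d$ and $cAd$. $\varphi(x)$ is invariant with respect to $(2,2)$-modal asimulations iff for every $\Theta\supseteq\Sigma_\varphi$, all pointed $\Theta$-models $(M_1,t),(M_2,u)$, every such $(A,B)$, and all $a\in U_1,b\in U_2$ with $aAb$: $a\models_1\varphi(x)$ implies $b\models_2\varphi(x)$. *)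

From Stdlib Require Import Arith List.

Definition var := nat.

Inductive fo : Type :=
| FR   : var -> var -> fo
| FRb  : var -> var -> fo
| FRd  : var -> var -> fo
| FP   : nat -> var -> fo
| FBot : fo
| FTop : fo
| FNot : fo -> fo
| FAnd : fo -> fo -> fo
| FOr  : fo -> fo -> fo
| FImp : fo -> fo -> fo
| FAll : var -> fo -> fo
| FEx  : var -> fo -> fo.

Fixpoint free_in (v : var) (f : fo) : Prop :=
  match f with
  | FR x y | FRb x y | FRd x y => v = x \/ v = y
  | FP _ x => v = x
  | FBot | FTop => False
  | FNot g => free_in v g
  | FAnd g h | FOr g h | FImp g h => free_in v g \/ free_in v h
  | FAll y g | FEx y g => v <> y /\ free_in v g
  end.

(* P_n occurs in f  (so Sigma_f = {R,R_Box,R_Dia} u {P_n : occurs_P n f}) *)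
Fixpoint occurs_P (n : nat) (f : fo) : Prop :=
  match f with
  | FP m _ => n = m
  | FR _ _ | FRb _ _ | FRd _ _ | FBot | FTop => False
  | FNot g => occurs_P n g
  | FAnd g h | FOr g h | FImp g h => occurs_P n g \/ occurs_P n h
  | FAll _ g | FEx _ g => occurs_P n g
  end.

(* Sigma-structures (nonempty domain, as in classical first-order logic). *)
Record model : Type := Model {
  U   : Type;
  pt  : U;
  iR  : U -> U -> Prop;
  iRb : U -> U -> Prop;
  iRd : U -> U -> Prop;
  iP  : nat -> U -> Prop }.

Definition update {M : model} (g : var -> U M) (v : var) (a : U M) : var -> U M :=
  fun w => if Nat.eqb w v then a else g w.

Fixpoint sat (M : model) (g : var -> U M) (f : fo) : Prop :=
  match f with
  | FR x y => iR M (g x) (g y)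
  | FRb x y => iRb M (g x) (g y)
  | FRd x y => iRd M (g x) (g y)
  | FP n x => iP M n (g x)
  | FBot => False
  | FTop => True
  | FNot h => ~ sat M g h
  | FAnd h k => sat M g h /\ sat M g k
  | FOr h k => sat M g h \/ sat M g k
  | FImp h k => sat M g h -> sat M g k
  | FAll y h => forall a : U M, sat M (update g y a) h
  | FEx y h => exists a : U M, sat M (update g y a) h
  end.

Definition holds_at (M : model) (f : fo) (x : var) (a : U M) : Prop :=
  forall g : var -> U M, g x = a -> sat M g f.

Inductive mi : Type :=
| MVar : nat -> mi
| MBot : mi
| MAnd : mi -> mi -> mi
| MOr  : mi -> mi -> mi
| MImp : mi -> mi -> mi
| MBox : mi -> mi
| MDia : mi -> mi.

(* Standard translation ST_22; bound variables y := x+1, z := x+2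
   (ST(I,v) has only v free, so no capture can occur). *)
Fixpoint ST22 (I : mi) (x : var) : fo :=
  match I with
  | MVar n => FP n x
  | MBot => FBot
  | MAnd J K => FAnd (ST22 J x) (ST22 K x)
  | MOr J K => FOr (ST22 J x) (ST22 K x)
  | MImp J K =>
      FAll (S x) (FImp (FR x (S x)) (FImp (ST22 J (S x)) (ST22 K (S x))))
  | MBox J =>
      FAll (S x) (FImp (FR x (S x))
        (FAll (S (S x)) (FImp (FRb (S x) (S (S x))) (ST22 J (S (S x))))))
  | MDia J =>
      FAll (S x) (FImp (FR x (S x))
        (FEx (S (S x)) (FAnd (FRd (S x) (S (S x))) (ST22 J (S (S x))))))
  end.

(* A (resp. B) subset of (U1 x U2) u (U2 x U1) is represented by its two
   components Aij : Ui -> Uj -> Prop and Aji : Uj -> Ui -> Prop.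
   Theta (beyond R, R_Box, R_Dia) is given by the set of indices n with P_n in Theta. *)
Definition asim_dir (Theta : nat -> Prop) (Mi Mj : model)
  (Aij : U Mi -> U Mj -> Prop) (Aji : U Mj -> U Mi -> Prop)
  (Bij : U Mi -> U Mj -> Prop) : Prop :=
  (forall n a b, Theta n -> Aij a b -> iP Mi n a -> iP Mj n b) /\
  (forall a b d, Aij a b -> iR Mj b d ->
     exists c, iR Mi a c /\ Aij c d /\ Aji d c) /\
  (forall a b d f, Aij a b -> iR Mj b d -> iRb Mj d f ->
     exists c e, iR Mi a c /\ iRb Mi c e /\ Aij e f) /\
  (forall a b d, Aij a b -> iR Mj b d ->
     exists c, iR Mi a c /\ Bij c d) /\
  (forall a b c, Bij a b -> iRd Mi a c ->
     exists d, iRd Mj b d /\ Aij c d).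

Definition asim22 (Theta : nat -> Prop) (M1 M2 : model) (t : U M1) (u : U M2)
  (A12 : U M1 -> U M2 -> Prop) (A21 : U M2 -> U M1 -> Prop)
  (B12 : U M1 -> U M2 -> Prop) (B21 : U M2 -> U M1 -> Prop) : Prop :=
  A12 t u /\
  asim_dir Theta M1 M2 A12 A21 B12 /\
  asim_dir Theta M2 M1 A21 A12 B21.

Definition invariant22 (f : fo) (x : var) : Prop :=
  forall (Theta : nat -> Prop),
    (forall n, occurs_P n f -> Theta n) ->
    forall (M1 M2 : model) (t : U M1) (u : U M2) A12 A21 B12 B21,
      asim22 Theta M1 M2 t u A12 A21 B12 B21 ->
      forall (a : U M1) (b : U M2), A12 a b ->
        holds_at M1 f x a -> holds_at M2 f x b.

Definition log_equiv (f g : fo) : Prop :=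
  forall (M : model) (h : var -> U M), sat M h f <-> sat M h g.

(* If phi were not equivalent to a finite conjunction of its ST22-consequences,
   compactness would give a point w satisfying every ST22-consequence of phi but not
   phi.  Any finitely many modal intuitionistic formulas false at w are all false at
   some point satisfying phi (otherwise their disjunction would be a consequence of
   phi, hence true at w), so compactness again gives a point v satisfying phi whose
   modal intuitionistic theory is included in that of w.  Both points live in
   countable ultraproducts over a free ultrafilter on nat, which are omega-saturated,
   and in such models inclusion of modal intuitionistic theories, together with
   inclusion of the theories of R_Dia-successors as B, is a (2,2)-modal asimulation.
   Invariance then carries phi from v to w, a contradiction. *)

From mathcomp Require all_boot classical_sets filter.

Record free_ultrafilter (F : (nat -> Prop) -> Prop) : Prop := {
  uf_proper : ~ F (fun _ => False);
  uf_meet : forall A B, F A -> F B -> F (fun n => A n /\ B n);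
  uf_mono : forall A B : nat -> Prop, F A -> (forall n, A n -> B n) -> F B;
  uf_ultra : forall A, F A \/ F (fun n => ~ A n);
  uf_tail : forall k, F (fun n => k <= n) }.

Arguments uf_proper {F}.
Arguments uf_meet {F} _ {A B}.
Arguments uf_mono {F} _ {A B}.
Arguments uf_ultra {F}.
Arguments uf_tail {F}.

Module FreeUltrafilter.
Import all_boot classical_sets filter.

Lemma free_ultrafilter_exists : exists F, free_ultrafilter F.
Proof.
have [G [GU sub]] := ultraFilterLemma eventually_filter.
exists G; split.
- exact: filter_not_empty.
- by move=> A B; exact: filterI.
- by move=> A B FA AB; apply: filterS FA.
- by move=> A; exact: in_ultra_setVsetC.
- by move=> k; apply: sub; exists k => // n /=; exact: elimT leP.
Qed.

End FreeUltrafilter.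

From Stdlib Require Import Arith Lia Classical ClassicalEpsilon Cantor Setoid
  FunctionalExtensionality.

Lemma forall_le_0 (R : nat -> Prop) : (forall i, i <= 0 -> R i) <-> R 0.
Proof. split; [auto | intros H i Hi; now replace i with 0 by lia]. Qed.

Lemma forall_le_S (R : nat -> Prop) k :
  (forall i, i <= S k -> R i) <-> (forall i, i <= k -> R i) /\ R (S k).
Proof.
split; [auto | intros [H HS] i Hi].
destruct (Nat.eq_dec i (S k)) as [-> | Hne]; [assumption | apply H; lia].
Qed.

Lemma exists_le_0 (R : nat -> Prop) : (exists i, i <= 0 /\ R i) <-> R 0.
Proof. split; [intros [i [Hi Ri]]; now replace 0 with i by lia | now exists 0]. Qed.

Lemma exists_le_S (R : nat -> Prop) k :
  (exists i, i <= S k /\ R i) <-> (exists i, i <= k /\ R i) \/ R (S k).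
Proof.
split.
- intros [i [Hi Ri]]. destruct (Nat.eq_dec i (S k)) as [-> | Hne]; [now right | left].
  exists i. split; [lia | assumption].
- intros [[i [Hi Ri]] | RS]; [exists i | exists (S k)]; auto.
Qed.

Lemma longest_prefix_witness {A : Type} (Q : A -> Prop) (P : nat -> A -> Prop) (a0 : A) :
  Q a0 -> forall n, exists a, Q a /\ forall k, k <= n ->
    (exists b, Q b /\ forall i, i <= k -> P i b) -> forall i, i <= k -> P i a.
Proof.
intros Ha0 n. induction n as [|n IHn].
- destruct (classic (exists b, Q b /\ forall i, i <= 0 -> P i b)) as [[b [Qb Pb]] | Hno].
  + exists b. split; auto. intros k Hk _ i Hi. apply Pb. lia.
  + exists a0. split; auto. intros k Hk Hex. now replace k with 0 in Hex by lia.
- destruct (classic (exists b, Q b /\ forall i, i <= S n -> P i b)) as [[b [Qb Pb]] | Hno].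
  + exists b. split; auto. intros k Hk _ i Hi. apply Pb. lia.
  + destruct IHn as [a [Qa Pa]]. exists a. split; auto. intros k Hk Hex. apply Pa; auto.
    destruct (Nat.eq_dec k (S n)) as [-> | Hne]; [contradiction | lia].
Qed.

Lemma update_eq {M : model} (g : var -> U M) v a : update g v a v = a.
Proof. unfold update. now rewrite Nat.eqb_refl. Qed.

Lemma update_neq {M : model} (g : var -> U M) v a w : w <> v -> update g v a w = g w.
Proof. intro Hwv. unfold update. now apply Nat.eqb_neq in Hwv as ->. Qed.

Lemma sat_coincidence M f : forall g h : var -> U M,
  (forall v, free_in v f -> g v = h v) -> sat M g f <-> sat M h f.
Proof.
induction f; intros g h E; cbn in *;
  try (rewrite ?E by auto; reflexivity);
  try (rewrite (IHf g h E); reflexivity);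
  try (rewrite (IHf1 g h), (IHf2 g h) by (intros; apply E; auto); reflexivity).
all: assert (K : forall a, sat M (update g v a) f <-> sat M (update h v a) f)
       by (intro a; apply IHf; intros w Hw; unfold update;
           destruct (Nat.eqb_spec w v); auto).
all: now setoid_rewrite K.
Qed.

Lemma sat_ext M f (g h : var -> U M) : (forall v, g v = h v) -> sat M g f <-> sat M h f.
Proof. intro E. apply sat_coincidence. intros v _. apply E. Qed.

Lemma sat_iff_holds_at M f x (g : var -> U M) :
  (forall v, free_in v f -> v = x) -> sat M g f <-> holds_at M f x (g x).
Proof.
intro Hfree. split.
- intros Hg h Hhx. apply (sat_coincidence M f g h); auto.
  intros v Hv. now rewrite (Hfree v Hv).
- intro Hg. now apply Hg.
Qed.

Fixpoint forces (M : model) (I : mi) (w : U M) : Prop :=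
  match I with
  | MVar n => iP M n w
  | MBot => False
  | MAnd J K => forces M J w /\ forces M K w
  | MOr J K => forces M J w \/ forces M K w
  | MImp J K => forall v, iR M w v -> forces M J v -> forces M K v
  | MBox J => forall v, iR M w v -> forall u, iRb M v u -> forces M J u
  | MDia J => forall v, iR M w v -> exists u, iRd M v u /\ forces M J u
  end.

Lemma sat_ST22 M I : forall x (g : var -> U M), sat M g (ST22 I x) <-> forces M I (g x).
Proof.
induction I; intros x g; cbn [ST22 sat forces]; try tauto.
1, 2: now rewrite IHI1, IHI2.
all: assert (Hx : forall a, update g (S x) a x = g x) by (intro; apply update_neq; lia).
all: assert (Hx2 : forall a b, update (update g (S x) a) (S (S x)) b (S x) = a)
       by (intros; rewrite update_neq by lia; apply update_eq).
all: repeat setoid_rewrite IHI || setoid_rewrite IHI1 || setoid_rewrite IHI2.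
all: setoid_rewrite update_eq; try setoid_rewrite Hx2; setoid_rewrite Hx; reflexivity.
Qed.

Section Ultraproduct.

Variable F : (nat -> Prop) -> Prop.
Hypothesis HF : free_ultrafilter F.

Lemma uf_iff (A B : nat -> Prop) : (forall n, A n <-> B n) -> F A <-> F B.
Proof. intro AB. split; intro H; apply (uf_mono HF H); apply AB. Qed.

Lemma uf_true : F (fun _ => True).
Proof. exact (uf_mono HF (uf_tail HF 0) (fun _ _ => I)). Qed.

Lemma uf_not (A : nat -> Prop) : F (fun n => ~ A n) <-> ~ F A.
Proof.
split.
- intros HnA HA. apply (uf_proper HF). apply (uf_mono HF (uf_meet HF HA HnA)). tauto.
- intro HnA. now destruct (uf_ultra HF A).
Qed.

Lemma uf_and (A B : nat -> Prop) : F (fun n => A n /\ B n) <-> F A /\ F B.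
Proof.
split.
- intro H. split; apply (uf_mono HF H); tauto.
- intros [HA HB]. exact (uf_meet HF HA HB).
Qed.

Lemma uf_or (A B : nat -> Prop) : F (fun n => A n \/ B n) <-> F A \/ F B.
Proof.
split.
- intro H. destruct (uf_ultra HF A) as [HA | HnA]; [now left | right].
  apply (uf_mono HF (uf_meet HF H HnA)). tauto.
- intros [HA | HB]; [apply (uf_mono HF HA) | apply (uf_mono HF HB)]; tauto.
Qed.

Lemma uf_imp (A B : nat -> Prop) : F (fun n => A n -> B n) <-> (F A -> F B).
Proof.
split.
- intros H HA. apply (uf_mono HF (uf_meet HF H HA)). tauto.
- intro H. destruct (uf_ultra HF A) as [HA | HnA].
  + apply (uf_mono HF (H HA)). tauto.
  + apply (uf_mono HF HnA). tauto.
Qed.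

Lemma uf_forall_le (P : nat -> nat -> Prop) k :
  (forall i, i <= k -> F (P i)) -> F (fun n => forall i, i <= k -> P i n).
Proof.
induction k as [|k IHk]; intro H.
- rewrite (uf_iff _ _ (fun n => forall_le_0 (fun i => P i n))). now apply H.
- rewrite (uf_iff _ _ (fun n => forall_le_S (fun i => P i n) k)), uf_and.
  split; [apply IHk; auto | now apply H].
Qed.

Definition ultraproduct (Ms : nat -> model) : model :=
  {| U := forall n, U (Ms n);
     pt := fun n => pt (Ms n);
     iR := fun a b => F (fun n => iR (Ms n) (a n) (b n));
     iRb := fun a b => F (fun n => iRb (Ms n) (a n) (b n));
     iRd := fun a b => F (fun n => iRd (Ms n) (a n) (b n));
     iP := fun k a => F (fun n => iP (Ms n) k (a n)) |}.

Arguments ultraproduct : simpl never.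

Theorem sat_ultraproduct Ms f : forall g : var -> U (ultraproduct Ms),
  sat (ultraproduct Ms) g f <-> F (fun n => sat (Ms n) (fun v => g v n) f).
Proof.
induction f; intro g; cbn [sat]; try reflexivity.
- split; [tauto | apply (uf_proper HF)].
- split; [intros _; exact uf_true | auto].
- now rewrite IHf, uf_not.
- now rewrite IHf1, IHf2, uf_and.
- now rewrite IHf1, IHf2, uf_or.
- now rewrite IHf1, IHf2, uf_imp.
all: assert (K : forall a, sat (ultraproduct Ms) (update g v a) f <->
                 F (fun n => sat (Ms n) (update (fun w => g w n) v (a n)) f))
       by (intro a; rewrite IHf; apply uf_iff; intro n; apply sat_ext; intro w;
           unfold update; now destruct (w =? v)).
- split.
  + pose (P n b := ~ sat (Ms n) (update (fun w => g w n) v b) f).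
    intro H. apply (uf_mono HF (proj1 (K (fun n => epsilon (inhabits (pt (Ms n))) (P n)))
                                  (H _))).
    intros n Hn b. apply NNPP. intro Hb.
    exact (epsilon_spec _ (P n) (ex_intro _ b Hb) Hn).
  + intros H a. apply K. apply (uf_mono HF H). auto.
- split.
  + intros [a Ha]. apply (uf_mono HF (proj1 (K a) Ha)). intros n Hn. now exists (a n).
  + pose (P n b := sat (Ms n) (update (fun w => g w n) v b) f).
    intro H. exists (fun n => epsilon (inhabits (pt (Ms n))) (P n)).
    apply K. apply (uf_mono HF H). intros n Hn. exact (epsilon_spec _ (P n) Hn).
Qed.

Theorem ultraproduct_saturated Ms (psi : nat -> fo) x (a : U (ultraproduct Ms)) :
  (forall k, exists g : var -> U (ultraproduct Ms),
     g x = a /\ forall i, i <= k -> sat (ultraproduct Ms) g (psi i)) ->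
  exists g : var -> U (ultraproduct Ms),
    g x = a /\ forall i, sat (ultraproduct Ms) g (psi i).
Proof.
intro Hfin.
pose (X k n := exists h : var -> U (Ms n),
                 h x = a n /\ forall i, i <= k -> sat (Ms n) h (psi i)).
assert (HX : forall k, F (X k)).
{ intro k. destruct (Hfin k) as [g [Hgx Hg]].
  apply (uf_mono HF (uf_forall_le (fun i n => sat (Ms n) (fun v => g v n) (psi i)) k
                       (fun i Hi => proj1 (sat_ultraproduct _ _ _) (Hg i Hi)))).
  intros n Hn. exists (fun v => g v n). now rewrite Hgx. }
(* At coordinate n, realise the longest realisable prefix of length at most n;
   since F contains every tail, each prefix is then realised almost everywhere. *)
pose (Best n h := h x = a n /\
                  forall k, k <= n -> X k n -> forall i, i <= k -> sat (Ms n) h (psi i)).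
pose (h n := epsilon (inhabits (fun _ : var => a n)) (Best n)).
assert (Hh : forall n, Best n (h n)).
{ intro n. apply epsilon_spec.
  now apply (longest_prefix_witness (fun h => h x = a n) _ (fun _ => a n)). }
exists (fun v n => h n v). split.
- apply functional_extensionality_dep. intro n. apply Hh.
- intro k. apply sat_ultraproduct. apply (uf_mono HF (uf_meet HF (HX k) (uf_tail HF k))).
  intros n [HXn Hkn]. exact (proj2 (Hh n) k Hkn HXn k (le_n k)).
Qed.

Theorem ultraproduct_compactness (psi : nat -> fo) :
  (forall k, exists (M : model) (g : var -> U M), forall i, i <= k -> sat M g (psi i)) ->
  exists Ms (g : var -> U (ultraproduct Ms)), forall i, sat (ultraproduct Ms) g (psi i).
Proof.
intro Hfin.
destruct (choice (fun k (Mg : {M : model & var -> U M}) =>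
                    forall i, i <= k -> sat (projT1 Mg) (projT2 Mg) (psi i)))
  as [Mg HMg].
{ intro k. destruct (Hfin k) as [M [g Hg]]. now exists (existT _ M g). }
exists (fun n => projT1 (Mg n)), (fun v n => projT2 (Mg n) v).
intro i. apply sat_ultraproduct. apply (uf_mono HF (uf_tail HF i)). intros n Hn.
now apply HMg.
Qed.

End Ultraproduct.

Fixpoint mi_code (I : mi) : nat :=
  match I with
  | MVar n => Cantor.to_nat (0, n)
  | MBot => Cantor.to_nat (1, 0)
  | MAnd J K => Cantor.to_nat (2, Cantor.to_nat (mi_code J, mi_code K))
  | MOr J K => Cantor.to_nat (3, Cantor.to_nat (mi_code J, mi_code K))
  | MImp J K => Cantor.to_nat (4, Cantor.to_nat (mi_code J, mi_code K))
  | MBox J => Cantor.to_nat (5, mi_code J)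
  | MDia J => Cantor.to_nat (6, mi_code J)
  end.

Lemma to_nat_inj a b c d : Cantor.to_nat (a, b) = Cantor.to_nat (c, d) -> a = c /\ b = d.
Proof.
intro E. apply (f_equal Cantor.of_nat) in E. rewrite !Cantor.cancel_of_to in E.
now injection E.
Qed.

Lemma mi_code_inj I : forall J, mi_code I = mi_code J -> I = J.
Proof.
induction I; intros [] E; cbn [mi_code] in E; apply to_nat_inj in E as [Etag E];
  try discriminate; try apply to_nat_inj in E as [E1 E2]; f_equal; auto.
Qed.

Definition mi_enum (n : nat) : mi := epsilon (inhabits MBot) (fun I => mi_code I = n).

Lemma mi_enum_code I : mi_enum (mi_code I) = I.
Proof.
apply mi_code_inj.
exact (epsilon_spec _ (fun J => mi_code J = mi_code I) (ex_intro _ I eq_refl)).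
Qed.

Definition mi_top : mi := MImp MBot MBot.

Definition selected (Q : nat -> Prop) (default : mi) (i : nat) : mi :=
  if excluded_middle_informative (Q i) then mi_enum i else default.

Fixpoint conj_upto (Q : nat -> Prop) (k : nat) : mi :=
  match k with
  | 0 => selected Q mi_top 0
  | S k' => MAnd (conj_upto Q k') (selected Q mi_top k)
  end.

Fixpoint disj_upto (Q : nat -> Prop) (k : nat) : mi :=
  match k with
  | 0 => selected Q MBot 0
  | S k' => MOr (disj_upto Q k') (selected Q MBot k)
  end.

Lemma forces_conj_upto M Q k w :
  forces M (conj_upto Q k) w <-> forall i, i <= k -> Q i -> forces M (mi_enum i) w.
Proof.
assert (Hsel : forall i,
          forces M (selected Q mi_top i) w <-> (Q i -> forces M (mi_enum i) w)).
{ intro i. unfold selected. destruct (excluded_middle_informative (Q i)); cbn; tauto. }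
induction k as [|k IHk]; cbn [conj_upto forces].
- now rewrite forall_le_0, Hsel.
- now rewrite forall_le_S, IHk, Hsel.
Qed.

Lemma forces_disj_upto M Q k w :
  forces M (disj_upto Q k) w <-> exists i, i <= k /\ Q i /\ forces M (mi_enum i) w.
Proof.
assert (Hsel : forall i, forces M (selected Q MBot i) w <-> Q i /\ forces M (mi_enum i) w).
{ intro i. unfold selected. destruct (excluded_middle_informative (Q i)); cbn; tauto. }
induction k as [|k IHk]; cbn [disj_upto forces].
- now rewrite exists_le_0, Hsel.
- now rewrite exists_le_S, IHk, Hsel.
Qed.

Definition fo_when (P : Prop) (f : fo) : fo :=
  if excluded_middle_informative P then f else FTop.

Lemma sat_fo_when M g P f : sat M g (fo_when P f) <-> (P -> sat M g f).
Proof. unfold fo_when. destruct (excluded_middle_informative P); cbn; tauto. Qed.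

Definition theory_incl (M N : model) (a : U M) (b : U N) : Prop :=
  forall I, forces M I a -> forces N I b.

Definition dia_theory_incl (M N : model) (a : U M) (b : U N) : Prop :=
  forall I, (exists c, iRd M a c /\ forces M I c) -> exists d, iRd N b d /\ forces N I d.

Section UltraproductAsimulation.

Variable F : (nat -> Prop) -> Prop.
Hypothesis HF : free_ultrafilter F.
Variables Ms1 Ms2 : nat -> model.

Local Notation M1 := (ultraproduct F Ms1).
Local Notation M2 := (ultraproduct F Ms2).

Lemma theory_incl_back_R a b d :
  theory_incl M1 M2 a b -> iR M2 b d ->
  exists c, iR M1 a c /\ theory_incl M1 M2 c d /\ theory_incl M2 M1 d c.
Proof.
intros Hab Hbd.
pose (Q i := forces M2 (mi_enum i) d).
assert (Happrox : forall k, exists c, iR M1 a c /\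
          forall i, i <= k -> (Q i <-> forces M1 (mi_enum i) c)).
{ intro k. apply NNPP. intro Hno.
  assert (Himp : forces M1 (MImp (conj_upto Q k) (disj_upto (fun i => ~ Q i) k)) a).
  { intros c Hac Hc. rewrite forces_conj_upto in Hc. rewrite forces_disj_upto.
    apply NNPP. intro Hd. apply Hno. exists c. split; [exact Hac |].
    intros i Hi. split; [now apply Hc | intro Hci].
    apply NNPP. intro Hnq. apply Hd. now exists i. }
  destruct (proj1 (forces_disj_upto _ _ _ _)
              (Hab _ Himp d Hbd (proj2 (forces_conj_upto _ _ _ _) (fun i _ q => q))))
    as [i [_ [Hnq Hq]]].
  contradiction. }
pose (psi i := FAnd (FR 0 1) (FAnd (fo_when (Q i) (ST22 (mi_enum i) 1))
                                   (fo_when (~ Q i) (FNot (ST22 (mi_enum i) 1))))).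
destruct (ultraproduct_saturated F HF Ms1 psi 0 a) as [g [Hg0 Hg]].
{ intro k. destruct (Happrox k) as [c [Hac Hc]].
  exists (update (fun _ => a) 1 c). split; [reflexivity |]. intros i Hi.
  cbn [psi sat]. rewrite !sat_fo_when. cbn [sat]. rewrite sat_ST22. cbn.
  specialize (Hc i Hi). tauto. }
assert (Hgi : forall i, Q i <-> forces M1 (mi_enum i) (g 1)).
{ intro i. specialize (Hg i). cbn [psi sat] in Hg. rewrite !sat_fo_when in Hg.
  cbn [sat] in Hg. rewrite sat_ST22 in Hg. destruct Hg as [_ [H1 H2]].
  split; [exact H1 | intro H; apply NNPP; intro Hn; exact (H2 Hn H)]. }
exists (g 1). split; [|split].
- specialize (Hg 0). cbn [psi sat] in Hg. rewrite Hg0 in Hg. apply Hg.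
- intro I. rewrite <- (mi_enum_code I). apply Hgi.
- intro I. rewrite <- (mi_enum_code I). apply Hgi.
Qed.

Lemma theory_incl_back_R_Rb a b d f :
  theory_incl M1 M2 a b -> iR M2 b d -> iRb M2 d f ->
  exists c e, iR M1 a c /\ iRb M1 c e /\ theory_incl M1 M2 e f.
Proof.
intros Hab Hbd Hdf.
pose (Q i := ~ forces M2 (mi_enum i) f).
assert (Happrox : forall k, exists c e, iR M1 a c /\ iRb M1 c e /\
          forall i, i <= k -> Q i -> ~ forces M1 (mi_enum i) e).
{ intro k. apply NNPP. intro Hno.
  assert (Hbox : forces M1 (MBox (disj_upto Q k)) a).
  { intros c Hac e Hce. rewrite forces_disj_upto.
    apply NNPP. intro Hd. apply Hno. exists c, e. split; [exact Hac |].
    split; [exact Hce |]. intros i Hi Hq He. apply Hd. now exists i. }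
  destruct (proj1 (forces_disj_upto _ _ _ _) (Hab _ Hbox d Hbd f Hdf)) as [i [_ [Hq Hf]]].
  contradiction. }
pose (psi i := FAnd (FR 0 1) (FAnd (FRb 1 2) (fo_when (Q i) (FNot (ST22 (mi_enum i) 2))))).
destruct (ultraproduct_saturated F HF Ms1 psi 0 a) as [g [Hg0 Hg]].
{ intro k. destruct (Happrox k) as [c [e [Hac [Hce He]]]].
  exists (update (update (fun _ => a) 1 c) 2 e). split; [reflexivity |]. intros i Hi.
  cbn [psi sat]. rewrite sat_fo_when. cbn [sat]. rewrite sat_ST22. cbn.
  specialize (He i Hi). tauto. }
exists (g 1), (g 2). split; [|split].
- specialize (Hg 0). cbn [psi sat] in Hg. rewrite Hg0 in Hg. apply Hg.
- specialize (Hg 0). cbn [psi sat] in Hg. apply Hg.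
- intro I. rewrite <- (mi_enum_code I). intro HI.
  specialize (Hg (mi_code I)). cbn [psi sat] in Hg. rewrite sat_fo_when in Hg.
  cbn [sat] in Hg. rewrite sat_ST22 in Hg. destruct Hg as [_ [_ Hnot]].
  apply NNPP. intro Hq. exact (Hnot Hq HI).
Qed.

Lemma theory_incl_back_R_dia a b d :
  theory_incl M1 M2 a b -> iR M2 b d ->
  exists c, iR M1 a c /\ dia_theory_incl M1 M2 c d.
Proof.
intros Hab Hbd.
pose (Q i := ~ exists z, iRd M2 d z /\ forces M2 (mi_enum i) z).
assert (Happrox : forall k, exists c, iR M1 a c /\
          forall i, i <= k -> Q i -> ~ exists z, iRd M1 c z /\ forces M1 (mi_enum i) z).
{ intro k. apply NNPP. intro Hno.
  assert (Hdia : forces M1 (MDia (disj_upto Q k)) a).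
  { intros c Hac. apply NNPP. intro Hnz. apply Hno. exists c. split; [exact Hac |].
    intros i Hi Hq [z [Hcz Hz]]. apply Hnz. exists z. split; [exact Hcz |].
    apply forces_disj_upto. now exists i. }
  destruct (Hab _ Hdia d Hbd) as [z [Hdz Hz]].
  destruct (proj1 (forces_disj_upto _ _ _ _) Hz) as [i [_ [Hq Hi]]].
  apply Hq. now exists z. }
pose (psi i := FAnd (FR 0 1)
                 (fo_when (Q i) (FNot (FEx 2 (FAnd (FRd 1 2) (ST22 (mi_enum i) 2)))))).
destruct (ultraproduct_saturated F HF Ms1 psi 0 a) as [g [Hg0 Hg]].
{ intro k. destruct (Happrox k) as [c [Hac Hc]].
  exists (update (fun _ => a) 1 c). split; [reflexivity |]. intros i Hi.
  cbn [psi sat]. rewrite sat_fo_when. cbn [sat]. setoid_rewrite sat_ST22. cbn.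
  specialize (Hc i Hi). tauto. }
exists (g 1). split.
- specialize (Hg 0). cbn [psi sat] in Hg. rewrite Hg0 in Hg. apply Hg.
- intro I. rewrite <- (mi_enum_code I). intro HI.
  specialize (Hg (mi_code I)). cbn [psi sat] in Hg. rewrite sat_fo_when in Hg.
  cbn [sat] in Hg. setoid_rewrite sat_ST22 in Hg. destruct Hg as [_ Hnot].
  apply NNPP. intro Hq. apply (Hnot Hq). destruct HI as [z [Hz HzI]].
  exists z. cbn. split; assumption.
Qed.

Lemma dia_theory_incl_forth a b c :
  dia_theory_incl M1 M2 a b -> iRd M1 a c ->
  exists d, iRd M2 b d /\ theory_incl M1 M2 c d.
Proof.
intros Hab Hac.
pose (Q i := forces M1 (mi_enum i) c).
assert (Happrox : forall k, exists d, iRd M2 b d /\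
          forall i, i <= k -> Q i -> forces M2 (mi_enum i) d).
{ intro k. destruct (Hab (conj_upto Q k)) as [d [Hbd Hd]].
  - exists c. split; [exact Hac |]. apply forces_conj_upto. auto.
  - exists d. split; [exact Hbd |]. now apply forces_conj_upto. }
pose (psi i := FAnd (FRd 0 1) (fo_when (Q i) (ST22 (mi_enum i) 1))).
destruct (ultraproduct_saturated F HF Ms2 psi 0 b) as [g [Hg0 Hg]].
{ intro k. destruct (Happrox k) as [d [Hbd Hd]].
  exists (update (fun _ => b) 1 d). split; [reflexivity |]. intros i Hi.
  cbn [psi sat]. rewrite sat_fo_when, sat_ST22. cbn. auto. }
exists (g 1). split.
- specialize (Hg 0). cbn [psi sat] in Hg. rewrite Hg0 in Hg. apply Hg.
- intro I. rewrite <- (mi_enum_code I). intro HI.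
  specialize (Hg (mi_code I)). cbn [psi sat] in Hg. rewrite sat_fo_when, sat_ST22 in Hg.
  now apply Hg.
Qed.

Lemma ultraproduct_asim_dir Theta :
  asim_dir Theta M1 M2 (theory_incl M1 M2) (theory_incl M2 M1) (dia_theory_incl M1 M2).
Proof.
repeat split.
- intros n a b _ Hab Ha. exact (Hab (MVar n) Ha).
- exact theory_incl_back_R.
- exact theory_incl_back_R_Rb.
- exact theory_incl_back_R_dia.
- exact dia_theory_incl_forth.
Qed.

End UltraproductAsimulation.

Section Characterisation.

Variable F : (nat -> Prop) -> Prop.
Hypothesis HF : free_ultrafilter F.
Variables (phi : fo) (x : var).
Hypothesis phi_free : forall v, free_in v phi -> v = x.
Hypothesis phi_invariant : invariant22 phi x.

Definition consequence (I : mi) : Prop :=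
  forall (M : model) (g : var -> U M), sat M g phi -> forces M I (g x).

Lemma ultraproduct_sat_of_consequences Ms (g : var -> U (ultraproduct F Ms)) :
  (forall I, consequence I -> forces (ultraproduct F Ms) I (g x)) ->
  sat (ultraproduct F Ms) g phi.
Proof.
intro Hcons.
pose (Mstar := ultraproduct F Ms).
pose (Q i := ~ forces Mstar (mi_enum i) (g x)).
pose (psi i := FAnd phi (fo_when (Q i) (FNot (ST22 (mi_enum i) x)))).
destruct (ultraproduct_compactness F HF psi) as [Ns [h Hh]].
{ intro k. apply NNPP. intro Hno.
  assert (Hdisj : consequence (disj_upto Q k)).
  { intros N h Hh. apply forces_disj_upto. apply NNPP. intro Hnd. apply Hno.
    exists N, h. intros i Hi. cbn [psi sat]. rewrite sat_fo_when. cbn [sat].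
    rewrite sat_ST22. split; [exact Hh |]. intros Hq Hhi. apply Hnd. now exists i. }
  destruct (proj1 (forces_disj_upto _ _ _ _) (Hcons _ Hdisj)) as [i [_ [Hq Hi]]].
  contradiction. }
pose (Nstar := ultraproduct F Ns).
assert (Hphi : sat Nstar h phi) by apply (Hh 0).
assert (Hincl : theory_incl Nstar Mstar (h x) (g x)).
{ intro I. rewrite <- (mi_enum_code I). intro HI. apply NNPP. intro Hq.
  specialize (Hh (mi_code I)). cbn [psi sat] in Hh. rewrite sat_fo_when in Hh.
  cbn [sat] in Hh. rewrite sat_ST22 in Hh. exact (proj2 Hh Hq HI). }
assert (Hasim : asim22 (fun _ => True) Nstar Mstar (h x) (g x)
          (theory_incl _ _) (theory_incl _ _) (dia_theory_incl _ _) (dia_theory_incl _ _)).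
{ split; [exact Hincl |]. split; apply (ultraproduct_asim_dir F HF). }
apply (sat_iff_holds_at _ _ _ _ phi_free).
apply (phi_invariant (fun _ => True) (fun _ _ => I) _ _ _ _ _ _ _ _ Hasim _ _ Hincl).
now apply (sat_iff_holds_at _ _ _ _ phi_free).
Qed.

Lemma finite_consequences_entail :
  exists k, forall (M : model) (g : var -> U M),
    forces M (conj_upto (fun i => consequence (mi_enum i)) k) (g x) -> sat M g phi.
Proof.
apply NNPP. intro Hno.
pose (Q i := consequence (mi_enum i)).
pose (psi i := FAnd (FNot phi) (fo_when (Q i) (ST22 (mi_enum i) x))).
destruct (ultraproduct_compactness F HF psi) as [Ms [g Hg]].
{ intro k. apply NNPP. intro Hk. apply Hno. exists k. intros M h Hh.
  apply NNPP. intro Hnphi. apply Hk. exists M, h. intros i Hi.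
  cbn [psi sat]. rewrite sat_fo_when, sat_ST22. split; [exact Hnphi |].
  intro Hq. now apply (proj1 (forces_conj_upto _ _ _ _) Hh i). }
apply (Hg 0). apply ultraproduct_sat_of_consequences.
intro I. rewrite <- (mi_enum_code I). intro HI.
specialize (Hg (mi_code I)). cbn [psi sat] in Hg. rewrite sat_fo_when, sat_ST22 in Hg.
now apply Hg.
Qed.

End Characterisation.

Theorem lemma8 (phi : fo) (x : var) :
  (forall v, free_in v phi -> v = x) ->
  invariant22 phi x ->
  exists I : mi, log_equiv phi (ST22 I x).
Proof.
intros Hfree Hinv.
destruct FreeUltrafilter.free_ultrafilter_exists as [F HF].
destruct (finite_consequences_entail F HF phi x Hfree Hinv) as [k Hk].
exists (conj_upto (fun i => consequence phi x (mi_enum i)) k).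
intros M g. rewrite sat_ST22. split; [| apply Hk].
intro Hphi. apply forces_conj_upto. intros i _ Hi. now apply Hi.
Qed.
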